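(* Let $\mathcal G_n=\{x_{i,n}\}_{i=1,\ldots,d_n}$ be an asymptotically uniform grid in $[a,b]$ with $d_n\to\infty$, and let $\mathcal G_n'=\{x'_{i,n}\}_{i=1,\ldots,d'_n}$ be a sequence of $d_n'$ real points such that $\mathcal G_n'\subset[a-\epsilon_n,b+\epsilon_n]$ for some $\epsilon_n\to0$ and $|\mathcal G_n\triangle\mathcal G_n'|=o(d_n)$ as $n\to\infty$. Then $d_n'/d_n\to1$ as $n\to\infty$, and $\mathcal G_n'$, with its points rearranged in increasing order, is an asymptotically uniform grid in $[a,b]$.
   Context: A sequence of points $\{x_{i,n}\}_{i=1,\ldots,m_n}$ is an asymptotically uniform grid in $[a,b]$ if $\max_{i=1,\ldots,m_n}|x_{i,n}-(a+i(b-a)/m_n)|\to0$. The sequences of points $\mathcal G_n,\mathcal G_n'$ are regarded as finite multisets, and $\mathcal G_n\triangle\mathcal G_n'=(\mathcal G_n\setminus\mathcal G_n')\cup(\mathcal G_n'\setminus\mathcal G_n)$ is the multiset symmetric difference (counting multiplicities). *)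

From HB Require Import structures.
From mathcomp Require Import all_boot all_order all_algebra.
From mathcomp Require Import all_classical all_reals all_analysis.
Set Implicit Arguments. Unset Strict Implicit. Unset Printing Implicit Defensive.
Import Order.TTheory GRing.Theory Num.Theory.
Import numFieldNormedType.Exports.
Local Open Scope classical_set_scope.
Local Open Scope ring_scope.

(* Maximal deviation of the finite sequence s = [x_1; ...; x_m] (x_i = nth 0 s (i-1))
   from the uniform grid a + i(b-a)/m, i = 1..m.  (0 for the empty sequence.) *)
Definition grid_dev (R : realType) (a b : R) (s : seq R) : R :=
  \big[Order.max/0]_(i < size s)
     `| nth 0 s i - (a + (i.+1)%:R * (b - a) / (size s)%:R) |.

Definition asymp_uniform_grid (R : realType) (a b : R) (G : nat -> seq R) : Prop :=
  (fun n => grid_dev a b (G n)) @ \oo --> (0 : R).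

(* Cardinality of the multiset symmetric difference of s and t (with multiplicities). *)
Definition msymdiff_card (R : realType) (s t : seq R) : nat :=
  \sum_(x <- undup (s ++ t)) `| (count_mem x s)%:Z - (count_mem x t)%:Z |%N.

(* For every predicate P, the numbers of points of G_n and of G'_n satisfying P
   differ by at most D_n = |G_n △ G'_n|.  If y is the i-th smallest point of
   G'_n, fewer than i points of G'_n lie below y and at least i lie at or below
   it, so the rank of y in G_n is within D_n of i.  As G_n is within η_n of the
   uniform grid of step h_n = (b - a)/d_n, this puts y within
   D_n h_n + η_n + ε_n of a + i h_n (ranks beyond d_n are handled by
   G'_n ⊂ [a - ε_n, b + ε_n]).  Counting points with P = predT gives
   |d'_n/d_n - 1| ≤ D_n/d_n, so replacing h_n by (b - a)/d'_n moves a + i h_n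
   by at most (b - a) D_n/d_n.  All these errors are o(1). *)

From mathcomp Require Import all_boot all_order all_algebra.
From mathcomp Require Import all_classical all_reals all_analysis.
From mathcomp Require Import zify ring lra.
Import Order.TTheory GRing.Theory Num.Theory.
Import numFieldNormedType.Exports.

Set Implicit Arguments.
Unset Strict Implicit.
Unset Printing Implicit Defensive.

Local Open Scope ring_scope.

Lemma count_leq_hasN_drop (T : Type) (P : pred T) (s : seq T) (k : nat) :
  ~~ has P (drop k s) -> (count P s <= k)%N.
Proof.
rewrite has_count -leqNgt leqn0 => /eqP P0.
rewrite -(cat_take_drop k s) count_cat P0 addn0.
by apply: leq_trans (count_size _ _) _; rewrite size_take_min geq_minl.
Qed.

Lemma count_geq_all_take (T : Type) (P : pred T) (s : seq T) (k : nat) :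
  (k <= size s)%N -> all P (take k s) -> (k <= count P s)%N.
Proof.
move=> ks; rewrite all_count => /eqP Pk.
by rewrite -(cat_take_drop k s) count_cat Pk size_takel // leq_addr.
Qed.

Section SortedRank.
Variables (disp : Order.disp_t) (T : porderType disp) (x0 : T) (s : seq T) (i : nat).
Hypotheses (s_sorted : sorted <=%O s) (lt_i_s : (i < size s)%N).

Lemma sorted_count_le_nth : (i < count (fun x => x <= nth x0 s i)%O s)%N.
Proof.
apply: count_geq_all_take => //; apply/(all_nthP x0) => j.
rewrite size_takel // ltnS => ji; rewrite nth_take ?ltnS //.
by apply: (sorted_leq_nth le_trans lexx) => //; rewrite inE (leq_ltn_trans ji).
Qed.

Lemma sorted_count_lt_nth : (count (fun x => x < nth x0 s i)%O s <= i)%N.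
Proof.
apply: count_leq_hasN_drop; apply/(has_nthP x0) => -[j].
rewrite size_drop nth_drop ltn_subRL => ijs.
by rewrite le_gtF // (sorted_leq_nth le_trans lexx) ?inE ?leq_addr.
Qed.

End SortedRank.

Lemma count_sum_mem (T : eqType) (P : pred T) (u s : seq T) :
  uniq u -> {subset s <= u} ->
  count P s = (\sum_(x <- u | P x) count_mem x s)%N.
Proof.
move=> u_uniq; elim: s => [|y s IHs] s_u /=; first by rewrite big1.
rewrite big_split /= -IHs => [|z zs]; last by apply: s_u; rewrite inE zs orbT.
congr (_ + _)%N; have yu : y \in u by apply: s_u; rewrite inE eqxx.
rewrite big_mkcond (bigD1_seq y) //= eqxx big1 ?addn0; first by case: (P y).
by move=> x /negbTE xy; rewrite eq_sym xy; case: (P x).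
Qed.

Lemma msymdiff_cardC (R : realType) (s t : seq R) :
  msymdiff_card s t = msymdiff_card t s.
Proof.
rewrite /msymdiff_card; under eq_bigr do rewrite distnC.
apply: perm_big; apply: uniq_perm; rewrite ?undup_uniq // => x.
by rewrite !mem_undup !mem_cat orbC.
Qed.

Lemma count_leq_msymdiff (R : realType) (P : pred R) (s t : seq R) :
  (count P s <= count P t + msymdiff_card s t)%N.
Proof.
set u := undup (s ++ t).
have u_uniq : uniq u := undup_uniq _.
rewrite !(count_sum_mem P u_uniq) => [|x xt|x xs]; first last.
- by rewrite mem_undup mem_cat xs.
- by rewrite mem_undup mem_cat xt orbT.
set d := fun x => `|(count_mem x s)%:Z - (count_mem x t)%:Z|%N.
have dP : (\sum_(x <- u | P x) d x <= \sum_(x <- u) d x)%N.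
  by rewrite [leqLHS]big_mkcond leq_sum // => x _; case: (P x).
apply: leq_trans (leq_add (leqnn _) dP); rewrite -big_split /= leq_sum // => x _.
by rewrite /d /=; lia.
Qed.

Lemma grid_dev_ge0 (R : realType) (a b : R) (s : seq R) : 0 <= grid_dev a b s.
Proof. by rewrite /grid_dev; elim/big_ind: _ => // x y x0 y0; rewrite le_max x0. Qed.

Lemma dist_size_ratio1 (R : realType) (s t : seq R) : (0 < size s)%N ->
  `|(size t)%:R / (size s)%:R - 1| <= (msymdiff_card s t)%:R / (size s)%:R :> R.
Proof.
move=> s_gt0; have m_gt0 : 0 < (size s)%:R :> R by rewrite ltr0n.
have := count_leq_msymdiff predT s t; have := count_leq_msymdiff predT t s.
rewrite !count_predT msymdiff_cardC => ub lb.
have -> : (size t)%:R / (size s)%:R - 1 = ((size t)%:R - (size s)%:R) / (size s)%:R :> R.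
  by rewrite mulrBl divff ?gt_eqF.
rewrite normrM [`|_^-1|]ger0_norm ?invr_ge0 ?ler0n // ler_pM2r ?invr_gt0 //.
by rewrite ler_distl lerBlDr -!natrD !ler_nat ub lb.
Qed.

Section PerturbedGrid.
Variables (R : realType) (a b e : R) (s t : seq R).
Hypotheses (le_ab : a <= b) (s_gt0 : (0 < size s)%N).
Hypothesis t_in : {in t, forall x, a - e <= x <= b + e}.
Let h := (b - a) / (size s)%:R.
Let D := msymdiff_card s t.

Let h_ge0 : 0 <= h. Proof. by rewrite divr_ge0 ?subr_ge0. Qed.

Lemma grid_dev_nth k : (k < size s)%N ->
  `|nth 0 s k - (a + k.+1%:R * h)| <= grid_dev a b s.
Proof. by move=> ks; rewrite mulrA; apply: (le_bigmax _ _ (Ordinal ks)). Qed.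

Lemma grid_rank_ub (y : R) k : (count (fun x => x < y)%R s <= k)%N -> (k < size s)%N ->
  y <= a + k.+1%:R * h + grid_dev a b s.
Proof.
move=> cnt ks; rewrite leNgt; apply/negP => y_gt.
suff : (k.+1 <= count (fun x => x < y)%R s)%N by rewrite ltnNge cnt.
apply: count_geq_all_take => //; apply/(all_nthP 0) => j.
rewrite size_takel // ltnS => jk; rewrite nth_take ?ltnS //.
have := grid_dev_nth (leq_ltn_trans jk ks); rewrite ler_distl => /andP[_ ub].
have : j.+1%:R * h <= k.+1%:R * h by rewrite ler_wpM2r // ler_nat.
lra.
Qed.

Lemma grid_rank_lb (y : R) k : (k < count (fun x => x <= y)%R s)%N ->
  a + k.+1%:R * h - grid_dev a b s <= y.
Proof.
move=> cnt; rewrite leNgt; apply/negP => y_lt.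
suff : (count (fun x => x <= y)%R s <= k)%N by rewrite leqNgt cnt.
apply: count_leq_hasN_drop; apply/(has_nthP 0) => -[j].
rewrite size_drop nth_drop ltn_subRL => kjs.
have := grid_dev_nth kjs; rewrite ler_distl => /andP[lb _].
have : k.+1%:R * h <= (k + j).+1%:R * h by rewrite ler_wpM2r // ler_nat ltnS leq_addr.
lra.
Qed.

Lemma sort_nth_ub i : (i < size t)%N ->
  nth 0 (sort <=%R t) i <= a + (i.+1%:R + D%:R) * h + grid_dev a b s + `|e|.
Proof.
move=> it; set y := nth 0 (sort <=%R t) i.
have /andP[_ le_y] : a - e <= y <= b + e by rewrite t_in // -(mem_sort <=%R) mem_nth ?size_sort.
have cnt : (count (fun x => x < y)%R s <= i + D)%N.
  apply: leq_trans (count_leq_msymdiff _ s t) _; rewrite leq_add2r -(count_sort <=%R).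
  by apply: sorted_count_lt_nth; rewrite ?sort_sorted ?size_sort //; apply: le_total.
have := grid_dev_ge0 a b s; have := ler_norm e; have := normr_ge0 e.
rewrite -natrD addSn.
case: (ltnP (i + D) (size s)) => [iDs | siD].
  by move: (grid_rank_ub cnt iDs); lra.
have : (size s)%:R * h <= (i + D).+1%:R * h by rewrite ler_wpM2r // ler_nat leqW.
rewrite /h mulrCA divff ?mulr1 ?pnatr_eq0 -?lt0n //; lra.
Qed.

Lemma sort_nth_lb i : (i < size t)%N ->
  a + (i.+1%:R - D%:R) * h - grid_dev a b s - `|e| <= nth 0 (sort <=%R t) i.
Proof.
move=> it; set y := nth 0 (sort <=%R t) i.
have /andP[y_ge _] : a - e <= y <= b + e by rewrite t_in // -(mem_sort <=%R) mem_nth ?size_sort.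
have cnt : (i < count (fun x => x <= y)%R s + D)%N.
  rewrite /D msymdiff_cardC; apply: leq_trans (count_leq_msymdiff _ t s).
  rewrite -(count_sort <=%R); apply: sorted_count_le_nth; rewrite ?size_sort //.
  by rewrite sort_sorted //; apply: le_total.
have := grid_dev_ge0 a b s; have := ler_norm e; have := normr_ge0 e.
case: (leqP D i) => [Di | iD].
  have : (i - D < count (fun x => x <= y)%R s)%N by rewrite ltn_subLR // addnC.
  move=> /grid_rank_lb; rewrite -subSn // natrB ?leqW //; lra.
have : i.+1%:R * h <= D%:R * h by rewrite ler_wpM2r // ler_nat.
rewrite mulrBl; lra.
Qed.

Lemma sort_nth_dist i : (i < size t)%N ->
  `|nth 0 (sort <=%R t) i - (a + i.+1%:R * h)| <= D%:R * h + grid_dev a b s + `|e|.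
Proof.
move=> it; have := sort_nth_ub it; have := sort_nth_lb it.
by rewrite ler_distl !mulrDl => lb ub; apply/andP; split; lra.
Qed.

Lemma grid_dev_sort_le :
  grid_dev a b (sort <=%R t) <=
    2 * (b - a) * (D%:R / (size s)%:R) + grid_dev a b s + `|e|.
Proof.
have ba_ge0 : 0 <= b - a by rewrite subr_ge0.
have Dh : D%:R * h = (b - a) * (D%:R / (size s)%:R) by rewrite mulrCA.
have drift_ge0 : 0 <= (b - a) * (D%:R / (size s)%:R) by rewrite -Dh mulr_ge0.
have eta_ge0 := grid_dev_ge0 a b s; have e_ge0 := normr_ge0 e.
rewrite [grid_dev _ _ (sort _ _)]/grid_dev size_sort.
apply: bigmax_le => [|[i /= it] _]; first lra.
have t_gt0 : (0 < size t)%N by rewrite (leq_ltn_trans _ it).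
have drift : `|i.+1%:R * h - i.+1%:R * (b - a) / (size t)%:R| <= D%:R * h.
  have -> : i.+1%:R * h - i.+1%:R * (b - a) / (size t)%:R =
      i.+1%:R / (size t)%:R * ((b - a) * ((size t)%:R / (size s)%:R - 1)).
    by rewrite /h; field; rewrite !gt_eqF ?ltr0n.
  rewrite normrM ger0_norm ?divr_ge0 // normrM (ger0_norm ba_ge0).
  have q_le1 : i.+1%:R / (size t)%:R <= 1 :> R by rewrite ler_pdivrMr ?ltr0n // mul1r ler_nat.
  apply: le_trans (ler_piMl _ q_le1) _; first by rewrite mulr_ge0.
  by rewrite Dh ler_wpM2l // dist_size_ratio1.
apply: le_trans (ler_distD (a + i.+1%:R * h) _ _) _.
rewrite [a + _ - _](_ : _ = i.+1%:R * h - i.+1%:R * (b - a) / (size t)%:R); last first.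
  by rewrite opprD addrACA subrr add0r.
by have := sort_nth_dist it; lra.
Qed.

End PerturbedGrid.

Local Open Scope classical_set_scope.

Lemma size_ratio_cvg1 (R : realType) (s t : nat -> seq R) :
  (\forall n \near \oo, (0 < size (s n))%N) ->
  (fun n => (msymdiff_card (s n) (t n))%:R / (size (s n))%:R) @ \oo --> (0 : R) ->
  (fun n => (size (t n))%:R / (size (s n))%:R) @ \oo --> (1 : R).
Proof.
move=> s_gt0 D_cvg0.
pose d n := (msymdiff_card (s n) (t n))%:R / (size (s n))%:R : R.
apply: (@squeeze_cvgr _ _ _ _ (fun n => 1 - d n) (fun n => 1 + d n)).
- by near=> n; rewrite -ler_distl dist_size_ratio1 //; near: n.
- by rewrite -[X in _ --> X]subr0; apply: cvgB => //; apply: cvg_cst.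
- by rewrite -[X in _ --> X]addr0; apply: cvgD => //; apply: cvg_cst.
Unshelve. all: by end_near.
Qed.

Lemma le_of_eventually_inside (R : realType) (a b : R) (e : nat -> R) (t : nat -> seq R) :
  e @ \oo --> (0 : R) -> (forall n x, x \in t n -> a - e n <= x <= b + e n) ->
  (\forall n \near \oo, (0 < size (t n))%N) -> a <= b.
Proof.
move=> e_cvg0 t_in t_gt0.
have e2_cvg0 : (fun n => 2 * e n) @ \oo --> (0 : R).
  by rewrite -(mulr0 2); apply: cvgM (cvg_cst _) e_cvg0.
rewrite -subr_le0 -(cvg_lim (@Rhausdorff R) e2_cvg0); apply: limr_ge; first exact: cvgP e2_cvg0.
near=> n; have : (0 < size (t n))%N by near: n.
case: (t n) (t_in n) => [|x r] // x_in _.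
by have /andP[] := x_in x (mem_head x r); lra.
Unshelve. all: by end_near.
Qed.

Theorem lemma3p11 (R : realType) (a b : R) (G G' : nat -> seq R) :
  asymp_uniform_grid a b G ->
  (fun n => ((size (G n))%:R : R)) @ \oo --> +oo ->
  (exists eps : nat -> R, eps @ \oo --> (0 : R) /\
     forall n x, x \in G' n -> a - eps n <= x <= b + eps n) ->
  (fun n => ((msymdiff_card (G n) (G' n))%:R / (size (G n))%:R : R)) @ \oo --> (0 : R) ->
  (fun n => ((size (G' n))%:R / (size (G n))%:R : R)) @ \oo --> (1 : R) /\
  asymp_uniform_grid a b (fun n => sort <=%R (G' n)).
Proof.
move=> G_unif G_size [e [e_cvg0 G'_in]] D_cvg0.
have G_gt0 : \forall n \near \oo, (0 < size (G n))%N.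
  by near=> n; rewrite -(ltr0n R); near: n; apply: cvgry_gt G_size 0.
have ratio_cvg1 := size_ratio_cvg1 G_gt0 D_cvg0.
have G'_gt0 : \forall n \near \oo, (0 < size (G' n))%N.
  near=> n; rewrite -(ltr0n R) -(@pmulr_lgt0 _ (size (G n))%:R^-1) ?invr_gt0 ?ltr0n.
  - by near: n; apply: cvgr_gt ratio_cvg1 _ ltr01.
  - by near: n.
have le_ab := le_of_eventually_inside e_cvg0 G'_in G'_gt0.
split => //; apply: (squeeze_cvgr (f := fun=> 0)
  (h := fun n => 2 * (b - a) * ((msymdiff_card (G n) (G' n))%:R / (size (G n))%:R) +
                 grid_dev a b (G n) + `|e n|)).
- near=> n; rewrite grid_dev_ge0 grid_dev_sort_le //; first by near: n.
  exact: G'_in.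
- exact: cvg_cst.
- have -> : (0 : R) = 2 * (b - a) * 0 + 0 + `|0 : R| by rewrite mulr0 normr0 !addr0.
  apply: cvgD; last exact: cvg_norm.
  by apply: cvgD => //; apply: cvgM => //; apply: cvg_cst.
Unshelve. all: by end_near.
Qed.
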